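(* If $\mathbb{A}_\Gamma$ is a non-abelian right-angled Artin group (with $\Gamma$ a finite simplicial graph), then $\mathrm{Aut}(\mathbb{A}_\Gamma)$ involves all finite groups.
   Context: $\mathbb{A}_\Gamma$ has the vertices of $\Gamma$ as generators and relations $[u,v]=1$ for each edge. A group $G$ involves all finite groups if every finite group is a quotient of some finite index subgroup of $G$. *)

From Stdlib Require List.
From HB Require Import structures.
From mathcomp Require Import all_boot all_fingroup.
Set Implicit Arguments. Unset Strict Implicit. Unset Printing Implicit Defensive.

Local Open Scope group_scope.

Definition simple_graph (V : finType) (E : rel V) : Prop :=
  symmetric E /\ irreflexive E.

Definition is_hom (G H : groupType) (f : G -> H) : Prop :=
  forall x y : G, f (x * y) = f x * f y.

(* (A, iota) is the right-angled Artin group A_Gamma of Gamma = (V, E):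
   iota sends the vertices to generators satisfying [iota u, iota v] = 1 for
   each edge, and (A, iota) is universal (initial) among such data, i.e.
   A = < V | [u,v] = 1 for uv in E >. *)
Definition is_RAAG (V : finType) (E : rel V) (A : groupType) (iota : V -> A)
  : Prop :=
  (forall u v, E u v -> iota u * iota v = iota v * iota u) /\
  (forall (K : groupType) (f : V -> K),
     (forall u v, E u v -> f u * f v = f v * f u) ->
     exists phi : A -> K, [/\ is_hom phi, (forall v, phi (iota v) = f v) &
        forall psi : A -> K, is_hom psi -> (forall v, psi (iota v) = f v) ->
          forall x, psi x = phi x]).

Definition abelian_group (A : groupType) : Prop :=
  forall x y : A, x * y = y * x.

Definition is_aut (A : groupType) (f : A -> A) : Prop :=
  is_hom f /\ bijective f.

Definition aut_subgroup (A : groupType) (H : (A -> A) -> Prop) : Prop :=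
  [/\ (forall f, H f -> is_aut f),
      H id,
      (forall f g, H f -> H g -> H (f \o g)) &
      (forall f g, H f -> is_aut g -> (forall x, g (f x) = x) -> H g)].

Definition finite_index_in_aut (A : groupType) (H : (A -> A) -> Prop) : Prop :=
  exists s : seq (A -> A),
    (forall g, List.In g s -> is_aut g) /\
    forall f, is_aut f ->
      exists2 g, List.In g s & exists2 h, H h & forall x, f x = g (h x).

(* Aut(A) involves all finite groups: every finite group G is a quotient of
   some finite-index subgroup H of Aut(A), i.e. there is a surjective
   homomorphism H -> G. *)
Definition aut_involves_all_finite_groups (A : groupType) : Prop :=
  forall (gT : finGroupType) (G : {group gT}),
    exists (H : (A -> A) -> Prop) (phi : (A -> A) -> gT),
      [/\ aut_subgroup H, finite_index_in_aut H,
          (forall f, H f -> phi f \in G),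
          (forall f g, H f -> H g -> phi (f \o g) = phi f * phi g) &
          (forall y, y \in G -> exists2 f, H f & phi f = y)].

From HB Require Import structures.
From mathcomp Require Import all_boot all_fingroup all_solvable.
From Stdlib Require Import Classical ClassicalEpsilon.
Set Implicit Arguments. Unset Strict Implicit. Unset Printing Implicit Defensive.

(* As A is not abelian, two vertices u, v of Gamma are not adjacent, so A maps
   onto every finite group generated by two elements, in particular onto
   T = Sym(X) for |X| = p a prime (a transposition and a p-cycle generate it).
   Taking X to contain the finite group gT, T is centreless and contains gT,
   acting on itself by right multiplication.  Aut(A) acts on the finite set
   Hom(A, T) by precomposition; let H be the automorphisms acting there as
   conjugation by some x with pi(x) in G.  H contains the kernel of the action,
   so it has finite index, and as T is centreless pi(x) is determined by the
   automorphism: this gives a homomorphism H -> G, onto since H contains the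
   inner automorphisms. *)

Local Open Scope group_scope.

Lemma hom1 (G K : groupType) (f : G -> K) : is_hom f -> f 1 = 1.
Proof. by move=> hf; apply: (mulgI (f 1)); rewrite -hf !mulg1. Qed.

Lemma homV (G K : groupType) (f : G -> K) (x : G) : is_hom f -> f x^-1 = (f x)^-1.
Proof. by move=> hf; apply/esym/mulg1_eq; rewrite -hf mulgV hom1. Qed.

Lemma hom_comp (G K L : groupType) (f : K -> L) (g : G -> K) :
  is_hom f -> is_hom g -> is_hom (f \o g).
Proof. by move=> hf hg x y /=; rewrite hg hf. Qed.

Lemma aut_id (G : groupType) : is_aut (@id G).
Proof. by split=> //; exists id. Qed.

Lemma aut_comp (G : groupType) (f g : G -> G) :
  is_aut f -> is_aut g -> is_aut (f \o g).
Proof. by move=> [hf bf] [hg bg]; split; [exact: hom_comp | exact: bij_comp]. Qed.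

Lemma aut_inverse (G : groupType) (f : G -> G) :
  is_aut f -> exists g, [/\ is_aut g, cancel f g & cancel g f].
Proof.
move=> [hf [g fK gK]]; exists g; split=> //; split; last by exists f.
by move=> x y; apply: (can_inj fK); rewrite hf !gK.
Qed.

Definition inner (G : groupType) (x : G) (z : G) : G := x * z * x^-1.

Lemma inner_hom (G : groupType) (x : G) : is_hom (inner x).
Proof. by move=> y z; rewrite /inner !mulgA mulgVK. Qed.

Lemma hom_inner (G K : groupType) (f : G -> K) (x z : G) :
  is_hom f -> f (inner x z) = inner (f x) (f z).
Proof. by move=> hf; rewrite /inner !hf homV. Qed.

Lemma inner1 (G : groupType) (z : G) : inner 1 z = z.
Proof. by rewrite /inner invg1 mulg1 mul1g. Qed.

Lemma innerM (G : groupType) (x y z : G) : inner (x * y) z = inner x (inner y z).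
Proof. by rewrite /inner invMg !mulgA. Qed.

Lemma innerVK (G : groupType) (x z : G) : inner x^-1 (inner x z) = z.
Proof. by rewrite -innerM mulVg inner1. Qed.

Lemma inner_aut (G : groupType) (x : G) : is_aut (inner x).
Proof.
split; first exact: inner_hom.
by exists (inner x^-1) => z; [exact: innerVK | rewrite -{1}[x]invgK innerVK].
Qed.

Lemma commute_of_inner_fix (G : groupType) (x z : G) : inner x z = z -> commute x z.
Proof. by move=> xz; rewrite /commute -{2}xz /inner mulgVK. Qed.

Lemma inner_inj_centreless (G : groupType) (x y : G) :
  (forall s : G, (forall t, commute s t) -> s = 1) ->
  (forall t, inner x t = inner y t) -> x = y.
Proof.
move=> centreless xy; have: y^-1 * x = 1.
  apply: centreless => t; rewrite /commute.
  have -> : y^-1 * x * t = y^-1 * inner x t * x by rewrite /inner !mulgA mulgVK.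
  by rewrite xy /inner !mulgA mulVg mul1g.
by move/mulg1_eq; rewrite invgK.
Qed.

Definition generated_by (A : groupType) (V : Type) (iota : V -> A) : Prop :=
  forall (K : groupType) (p q : A -> K), is_hom p -> is_hom q ->
    (forall v, p (iota v) = q (iota v)) -> forall z, p z = q z.

Lemma RAAG_generated (V : finType) (E : rel V) (A : groupType) (iota : V -> A) :
  is_RAAG E iota -> generated_by iota.
Proof.
move=> [iota_comm univ] K p q hp hq pq z.
have [|phi [_ _ phi_uniq]] := univ K (p \o iota).
  by move=> u v /iota_comm uv /=; rewrite -!hp uv.
by rewrite (phi_uniq p) // (phi_uniq q) // => v; rewrite -pq.
Qed.

Lemma abelian_of_commuting_generators (A : groupType) (V : Type) (iota : V -> A) :
  generated_by iota -> (forall u v, commute (iota u) (iota v)) -> abelian_group A.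
Proof.
move=> gen iota_comm.
have central v z : commute (iota v) z.
  apply/commute_of_inner_fix/(gen _ _ id (inner_hom _)) => // w.
  by rewrite /inner iota_comm mulgK.
move=> x z; apply/commute_of_inner_fix/(gen _ _ id (inner_hom _)) => // w.
by rewrite /inner -central mulgK.
Qed.

Lemma hom_onto_gen (A : groupType) (T : finGroupType) (pi : A -> T) (S : {set T}) :
  is_hom pi -> {in S, forall s, exists x, pi x = s} ->
  forall t, t \in <<S>> -> exists x, pi x = t.
Proof.
move=> hpi S_im t /gen_prodgP[n [s sS ->]].
elim: n s sS => [|n IHn] s sS; first by exists 1; rewrite big_ord0 hom1.
have [x pix] := S_im _ (sS ord0).
have [y piy] := IHn _ (fun i => sS (lift ord0 i)).
by exists (x * y); rewrite big_ord_recl hpi pix piy.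
Qed.

Lemma RAAG_onto_two_generated (V : finType) (E : rel V) (A : groupType)
    (iota : V -> A) (T : finGroupType) (u v : V) (a b : T) :
  symmetric E -> is_RAAG E iota -> u != v -> ~~ E u v ->
  <<[set a; b]>> = [set: T] ->
  exists2 pi : A -> T, is_hom pi & forall t, exists x, pi x = t.
Proof.
move=> symE [_ univ] uv nEuv gen_ab.
pose f w := if w == u then a else if w == v then b else 1.
have f_comm w w' : E w w' -> commute (f w) (f w').
  rewrite /f; case: (eqVneq w u) => [->|wu]; case: (eqVneq w' u) => [->|w'u] //.
  - by case: eqP => [-> /(negP nEuv)[] | _ _]; exact: commute1.
  - case: eqP => [-> | _ _]; last by rewrite /commute mulg1 mul1g.
    by rewrite symE => /(negP nEuv)[].
  - by do 2 case: eqP => _; rewrite /commute ?mulg1 ?mul1g.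
have [pi [hpi piE _]] := univ T f f_comm.
exists pi => // t; apply: (hom_onto_gen (S := [set a; b]) hpi).
  move=> s; rewrite !inE => /orP[]/eqP->; [exists (iota u) | exists (iota v)];
    by rewrite piE /f ?eqxx // eq_sym (negbTE uv).
by rewrite gen_ab inE.
Qed.

Lemma mem_In (T : eqType) (x : T) (s : seq T) : x \in s -> List.In x s.
Proof.
by elim: s => //= y s IHs; rewrite in_cons => /orP[/eqP->|/IHs]; [left | right].
Qed.

Lemma finite_index_in_aut_of_signature (A : groupType) (F : finType)
    (sig : (A -> A) -> F) (H : (A -> A) -> Prop) :
  (forall f g, is_aut f -> is_aut g -> sig f = sig g ->
     exists2 h, H h & forall x, f x = g (h x)) ->
  finite_index_in_aut H.
Proof.
move=> cover.
pose is_rep s g := is_aut g /\ ((exists2 f, is_aut f & sig f = s) -> sig g = s).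
pose rep s := epsilon (inhabits (@id A)) (is_rep s).
have repP s : is_rep s (rep s).
  apply: epsilon_spec; have [[f af sf]|none] := classic (exists2 f, is_aut f & sig f = s).
    by exists f.
  by exists id; split=> [|/none]; first exact: aut_id.
exists (map rep (enum F)); split.
  by move=> g /List.in_map_iff[s [<- _]]; exact: (repP s).1.
move=> f af; have [arep srep] := repP (sig f).
exists (rep (sig f)).
  by apply/List.in_map/mem_In; rewrite mem_enum.
by apply: cover; rewrite ?srep //; exists f.
Qed.

Section HomAction.

Variables (A : groupType) (V : finType) (iota : V -> A) (T : finGroupType).
Hypothesis gen : generated_by iota.

Definition extends_on_iota (f : {ffun V -> T}) (p : A -> T) : Prop :=
  is_hom p /\ forall v, p (iota v) = f v.

Definition hom_ext (f : {ffun V -> T}) : A -> T :=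
  epsilon (inhabits (fun _ => 1)) (extends_on_iota f).

Lemma hom_extE (ph : A -> T) :
  is_hom ph -> forall z, hom_ext [ffun v => ph (iota v)] z = ph z.
Proof.
move=> hph; set f := [ffun v => ph (iota v)].
have [hext extE] : extends_on_iota f (hom_ext f).
  by apply: epsilon_spec; exists ph; split=> // v; rewrite ffunE.
by apply: gen => // v; rewrite extE ffunE.
Qed.

(* The action of al on Hom(A, T), each homomorphism being encoded by its
   values on iota. *)
Definition hom_action (al : A -> A) : {ffun {ffun V -> T} -> {ffun V -> T}} :=
  [ffun f => [ffun v => hom_ext f (al (iota v))]].

Lemma hom_action_eq (al be : A -> A) : is_hom al -> is_hom be ->
  hom_action al = hom_action be ->
  forall ph : A -> T, is_hom ph -> forall z, ph (al z) = ph (be z).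
Proof.
move=> hal hbe eq_act ph hph; apply: gen => [||v /=]; [exact: hom_comp..|].
move/ffunP/(_ [ffun v => ph (iota v)])/ffunP/(_ v): eq_act.
by rewrite !ffunE !hom_extE.
Qed.

Lemma finite_index_in_aut_of_kernel (H : (A -> A) -> Prop) :
  (forall al, is_aut al ->
     (forall ph : A -> T, is_hom ph -> forall z, ph (al z) = ph z) -> H al) ->
  finite_index_in_aut H.
Proof.
move=> H_ker; apply: (@finite_index_in_aut_of_signature _ _ hom_action).
move=> f g af ag act_fg.
have [gi [agi gK giK]] := aut_inverse ag.
exists (gi \o f); last by move=> z /=; rewrite giK.
apply: H_ker => [|ph hph z /=]; first exact: aut_comp.
have := hom_action_eq af.1 ag.1 act_fg (hom_comp hph agi.1) z.
by rewrite /= gK.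
Qed.

End HomAction.

Definition aut_involves (A : groupType) (gT : finGroupType) (G : {group gT}) : Prop :=
  exists (H : (A -> A) -> Prop) (phi : (A -> A) -> gT),
    [/\ aut_subgroup H, finite_index_in_aut H,
        (forall f, H f -> phi f \in G),
        (forall f g, H f -> H g -> phi (f \o g) = phi f * phi g) &
        (forall y, y \in G -> exists2 f, H f & phi f = y)].

Section CentrelessQuotient.

Variables (A : groupType) (V : finType) (iota : V -> A).
Variables (T : finGroupType) (pi : A -> T).
Variables (gT : finGroupType) (G : {group gT}) (e : gT -> T).
Hypotheses (gen : generated_by iota) (pi_hom : is_hom pi).
Hypothesis pi_onto : forall t, exists x, pi x = t.
Hypothesis T_centreless : forall s : T, (forall t, commute s t) -> s = 1.
Hypotheses (e_hom : is_hom e) (e_inj : injective e).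

Definition acts_as_inner (al : A -> A) (x : A) : Prop :=
  forall ph : A -> T, is_hom ph -> forall z, ph (al z) = ph (inner x z).

Definition inner_lift (al : A -> A) (g : gT) : Prop :=
  g \in G /\ exists2 x, pi x = e g & acts_as_inner al x.

Definition liftable_aut (al : A -> A) : Prop := is_aut al /\ exists g, inner_lift al g.

Definition lift_of (al : A -> A) : gT := epsilon (inhabits 1) (inner_lift al).

Lemma acts_as_inner_pi_uniq al x y :
  acts_as_inner al x -> acts_as_inner al y -> pi x = pi y.
Proof.
move=> alx aly; apply: inner_inj_centreless => // t.
by have [z <-] := pi_onto t; rewrite -!hom_inner // -alx // aly.
Qed.

Lemma inner_lift_uniq al g g' : inner_lift al g -> inner_lift al g' -> g = g'.
Proof.
move=> [_ [x pix alx]] [_ [y piy aly]]; apply: e_inj.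
by rewrite -pix -piy; exact: acts_as_inner_pi_uniq alx aly.
Qed.

Lemma inner_lift_kernel al :
  (forall ph : A -> T, is_hom ph -> forall z, ph (al z) = ph z) -> inner_lift al 1.
Proof.
by move=> al_ker; split=> //; exists 1 => [|ph hph z]; rewrite ?hom1 ?inner1 ?al_ker.
Qed.

Lemma inner_lift_inner x g : g \in G -> pi x = e g -> inner_lift (inner x) g.
Proof. by move=> Gg pix; split=> //; exists x. Qed.

Lemma inner_lift_comp f g a b :
  is_aut g -> inner_lift f a -> inner_lift g b -> inner_lift (f \o g) (a * b).
Proof.
move=> [hg [gi _ giK]] [Ga [x pix fx]] [Gb [y piy gy]].
split; first exact: groupM.
have pi_x : pi x = inner (pi y) (pi (gi x)) by rewrite -hom_inner // -gy // giK.
exists (y * gi x).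
  by rewrite e_hom -pix -piy pi_x pi_hom /inner mulgVK.
move=> ph hph z /=.
by rewrite fx // -{1}(giK x) -hom_inner // gy // innerM.
Qed.

Lemma inner_lift_inv f g a : cancel g f -> inner_lift f a -> inner_lift g a^-1.
Proof.
move=> gK [Ga [x pix fx]]; split; first by rewrite groupV.
exists x^-1; first by rewrite !homV // pix.
move=> ph hph z.
by rewrite -{1}(innerVK x (g z)) hom_inner // -fx // gK -hom_inner.
Qed.

Lemma liftable_aut_comp f g : liftable_aut f -> liftable_aut g -> liftable_aut (f \o g).
Proof.
move=> [af [a fa]] [ag [b gb]].
by split; [exact: aut_comp | exists (a * b); exact: inner_lift_comp].
Qed.

Lemma liftable_aut_subgroup : aut_subgroup liftable_aut.
Proof.
split=> [f [] // | | | f g [af [a fa]] ag gfK].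
- by split; [exact: aut_id | exists 1; apply: inner_lift_kernel].
- exact: liftable_aut_comp.
- split=> //; exists a^-1; apply: inner_lift_inv fa => z.
  by apply: (bij_inj ag.2); rewrite gfK.
Qed.

Lemma lift_ofP al : liftable_aut al -> inner_lift al (lift_of al).
Proof. by move=> [_ ex]; exact: epsilon_spec. Qed.

Lemma lift_ofM f g :
  liftable_aut f -> liftable_aut g -> lift_of (f \o g) = lift_of f * lift_of g.
Proof.
move=> Hf Hg; apply: (@inner_lift_uniq (f \o g)).
  by apply/lift_ofP/liftable_aut_comp.
by apply: inner_lift_comp; [exact: Hg.1 | exact: lift_ofP..].
Qed.

Lemma lift_of_onto y : y \in G -> exists2 f, liftable_aut f & lift_of f = y.
Proof.
move=> Gy; have [x pix] := pi_onto (e y).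
have lift_x := inner_lift_inner Gy pix.
have lift_aut_x : liftable_aut (inner x) by split; [exact: inner_aut | exists y].
by exists (inner x) => //; apply: inner_lift_uniq (lift_ofP lift_aut_x) lift_x.
Qed.

Theorem aut_involves_of_centreless_quotient : aut_involves A G.
Proof.
exists liftable_aut, lift_of; split.
- exact: liftable_aut_subgroup.
- apply: (finite_index_in_aut_of_kernel (T := T) gen) => al al_aut al_ker.
  by split=> //; exists 1; exact: inner_lift_kernel al_ker.
- by move=> f /lift_ofP[Gf _].
- exact: lift_ofM.
- exact: lift_of_onto.
Qed.

End CentrelessQuotient.

Lemma perm_centre_trivial (X : finType) (s : {perm X}) :
  2 < #|X| -> (forall t, commute s t) -> s = 1.
Proof.
move=> X_gt2 s_central; apply/permP => i.
rewrite perm1; apply/eqP/contraT => si_i.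
have /subsetPn[j _]: ~~ ([set: X] \subset [set i; s i]).
  apply: contraL X_gt2 => /subset_leq_card.
  rewrite cardsT -leqNgt => /leq_trans; apply.
  by rewrite cards2; case: (i != s i).
rewrite !inE negb_or => /andP[ji jsi].
have /permP/(_ i) := s_central (tperm i j).
rewrite !permM tpermL tpermD // 1?eq_sym // => /perm_inj/eqP.
by rewrite eq_sym (negbTE ji).
Qed.

Lemma Sym_prime_two_generated (X : finType) :
  prime #|X| -> exists a b : {perm X}, <<[set a; b]>> = [set: {perm X}].
Proof.
move=> prX; have [x [y [_ _ xy]]] := card_gt1P (prime_gt1 prX).
have [|c _ ord_c] := @Cauchy _ _ 'Sym_X prX.
  by rewrite card_Sym; apply: dvdn_fact; rewrite prime_gt0 ?leqnn.
by exists (tperm x y), c; exact: gen_tperm_circular_shift.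
Qed.

Definition rmul_sum (gT : finGroupType) (Y : Type) (g : gT) (q : gT + Y) : gT + Y :=
  if q is inl h then inl (h * g) else q.

Lemma rmul_sumK (gT : finGroupType) (Y : Type) (g : gT) :
  cancel (@rmul_sum gT Y g) (rmul_sum g^-1).
Proof. by case=> //= h; rewrite mulgK. Qed.

Definition rmul_perm (gT : finGroupType) (Y : finType) (g : gT) :
    {perm (gT + Y)%type} :=
  perm (can_inj (@rmul_sumK gT Y g)).

Lemma rmul_perm_hom (gT : finGroupType) (Y : finType) : is_hom (@rmul_perm gT Y).
Proof. by move=> g h; apply/permP => -[k|y]; rewrite permM !permE //= mulgA. Qed.

Lemma rmul_perm_inj (gT : finGroupType) (Y : finType) : injective (@rmul_perm gT Y).
Proof. by move=> g h /permP/(_ (inl 1)); rewrite !permE /= !mul1g => -[]. Qed.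

Theorem proposition1p7 (V : finType) (E : rel V) (A : groupType) (iota : V -> A) :
  simple_graph E -> is_RAAG E iota -> ~ abelian_group A ->
  aut_involves_all_finite_groups A.
Proof.
move=> [symE _] R nonabelian gT G.
have gen := RAAG_generated R.
have [u [v nuv]] : exists u v, ~ commute (iota u) (iota v).
  apply: NNPP => all_comm.
  apply/nonabelian/(abelian_of_commuting_generators gen) => u v.
  by apply: NNPP => nuv; apply: all_comm; exists u, v.
have nEuv : ~~ E u v by apply/negP => /R.1.
have uv : u != v by apply/eqP => eq_uv; apply: nuv; rewrite eq_uv.
have [p gt_p pr_p] := prime_above #|gT|.+2.
pose X : finType := (gT + 'I_(p - #|gT|))%type.
have cardX : #|X| = p.
  by rewrite card_sum card_ord subnKC // (leq_trans (leqW (leqnSn _)) (ltnW gt_p)).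
have [a [b gen_ab]] : exists a b : {perm X}, <<[set a; b]>> = [set: {perm X}].
  by apply: Sym_prime_two_generated; rewrite cardX.
have [pi pi_hom pi_onto] := RAAG_onto_two_generated symE R uv nEuv gen_ab.
apply: (aut_involves_of_centreless_quotient G gen pi_hom pi_onto _
          (rmul_perm_hom _) (@rmul_perm_inj gT _)).
by move=> s; apply: perm_centre_trivial; rewrite cardX (leq_ltn_trans _ gt_p).
Qed.
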